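(* There exist a Cantor space $(X,d)$ and a homeomorphism $f$ of $X$ such that: (1) $X=\overline{Per(f)}$; (2) $f$ is equicontinuous; (3) $f$ has the periodic shadowing property; (4) $f$ does not have the strict periodic shadowing property; (5) $f^3$ has the strict periodic shadowing property.
   Context: A Cantor space is a compact metric space without isolated points that is totally disconnected. $Per(f)$ is the set of periodic points. Equicontinuous: for every $\epsilon>0$ there is $\delta>0$ with $d(x,y)\le\delta\Rightarrow\sup_{i\in\mathbb{Z}}d(f^i(x),f^i(y))\le\epsilon$. A $\delta$-cycle of a map $F$ is $(x_i)_{i=0}^m$, $m\ge1$, with $d(F(x_i),x_{i+1})\le\delta$ for $0\le i<m$ and $x_0=x_m$. $F$ has the periodic shadowing property if for every $\epsilon>0$ there is $\delta>0$ such that for every $\delta$-cycle $(x_i)_{i=0}^m$ of $F$ there is $p\in Per(F)$ with $d(x_i,F^i(p))\le\epsilon$ for $0\le i\le m$; $F$ has the strict periodic shadowing property if the same holds with $p$ required to satisfy $F^m(p)=p$. *)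

From Stdlib Require Import Reals List ZArith.
Open Scope R_scope.

Section Metric.
Context {X : Type} (d : X -> X -> R).

Definition is_metric : Prop :=
  (forall x y, 0 <= d x y) /\
  (forall x y, d x y = 0 <-> x = y) /\
  (forall x y, d x y = d y x) /\
  (forall x y z, d x z <= d x y + d y z).

Definition is_open (U : X -> Prop) : Prop :=
  forall x, U x -> exists e, 0 < e /\ forall y, d x y < e -> U y.

Definition compact_space : Prop :=
  forall (I : Type) (U : I -> X -> Prop),
    (forall i, is_open (U i)) -> (forall x, exists i, U i x) ->
    exists l : list I, forall x, exists i, In i l /\ U i x.

Definition no_isolated_points : Prop :=
  forall x e, 0 < e -> exists y, y <> x /\ d x y < e.

Definition connected_subset (A : X -> Prop) : Prop :=
  ~ exists U V, is_open U /\ is_open V /\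
      (forall x, A x -> U x \/ V x) /\
      (exists x, A x /\ U x) /\ (exists x, A x /\ V x) /\
      (forall x, A x -> U x -> V x -> False).

Definition totally_disconnected : Prop :=
  forall A, connected_subset A -> forall x y, A x -> A y -> x = y.

Definition cantor_space : Prop :=
  inhabited X /\ is_metric /\ compact_space /\ no_isolated_points /\
  totally_disconnected.

Definition continuous (f : X -> X) : Prop :=
  forall x e, 0 < e -> exists dl, 0 < dl /\ forall y, d x y < dl -> d (f x) (f y) < e.

Definition homeomorphism (f g : X -> X) : Prop :=
  (forall x, g (f x) = x) /\ (forall x, f (g x) = x) /\ continuous f /\ continuous g.

Definition periodic_point (f : X -> X) (p : X) : Prop :=
  exists n, (1 <= n)%nat /\ Nat.iter n f p = p.

Definition dense_periodic (f : X -> X) : Prop :=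
  forall x e, 0 < e -> exists p, periodic_point f p /\ d x p < e.

Definition iterZ (f g : X -> X) (i : Z) (x : X) : X :=
  match i with
  | Z0 => x
  | Zpos n => Nat.iter (Pos.to_nat n) f x
  | Zneg n => Nat.iter (Pos.to_nat n) g x
  end.

Definition equicontinuous (f g : X -> X) : Prop :=
  forall e, 0 < e -> exists dl, 0 < dl /\
    forall x y, d x y <= dl -> forall i : Z, d (iterZ f g i x) (iterZ f g i y) <= e.

Definition delta_cycle (F : X -> X) (dl : R) (xs : nat -> X) (m : nat) : Prop :=
  (1 <= m)%nat /\ (forall i, (i < m)%nat -> d (F (xs i)) (xs (S i)) <= dl) /\ xs 0%nat = xs m.

Definition periodic_shadowing (F : X -> X) : Prop :=
  forall e, 0 < e -> exists dl, 0 < dl /\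
    forall xs m, delta_cycle F dl xs m ->
      exists p, periodic_point F p /\
        forall i, (i <= m)%nat -> d (xs i) (Nat.iter i F p) <= e.

Definition strict_periodic_shadowing (F : X -> X) : Prop :=
  forall e, 0 < e -> exists dl, 0 < dl /\
    forall xs m, delta_cycle F dl xs m ->
      exists p, Nat.iter m F p = p /\
        forall i, (i <= m)%nat -> d (xs i) (Nat.iter i F p) <= e.

End Metric.

(* The space is the set of words over {b0, b1, q0, q1, q2} with the metric 2^-(first
   difference), a Cantor space.  The map f adds one, with carry, to the binary digits in front
   of the first marker q_i and turns that marker by one step of Z/3; it and its inverse are
   nonexpanding, hence f is an equicontinuous homeomorphism.  Putting a marker at position n
   approximates any word by a periodic one (the binary prefix returns after 2^n steps, the
   marker after 3), which gives dense periodic points and periodic shadowing.  A cycle of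
   length 2^K that follows a marker-free orbit cannot be shadowed by a point of period 2^K:
   2^K steps either turn a marker by 2^K, not a multiple of 3, or flip digit K.  For f^3 the
   marker is turned by multiples of 3, so everything beyond the marker of the approximant is
   fixed and the shadowing point closes up exactly. *)

From Stdlib Require Import Reals List ZArith Lia Lra Arith.
From Stdlib Require Import Classical ClassicalEpsilon FunctionalExtensionality.

Lemma half_pow_pos n : 0 < (/2) ^ n.
Proof. apply pow_lt; lra. Qed.

Lemma half_pow_lt_iff m n : (/2) ^ n < (/2) ^ m <-> (m < n)%nat.
Proof.
  assert (Hlt : forall i j, (i < j)%nat -> (/2) ^ j < (/2) ^ i).
  { intros i j Hij; rewrite !pow_inv.
    apply Rinv_lt_contravar; [apply Rmult_lt_0_compat|]; try (apply pow_lt; lra).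
    apply Rlt_pow; [lra | exact Hij]. }
  split; [|apply Hlt].
  intro H; destruct (le_lt_dec n m) as [L|L]; [|exact L].
  destruct (Nat.eq_dec n m); [subst; lra|].
  assert (H2 := Hlt n m ltac:(lia)); lra.
Qed.

Lemma half_pow_le_iff m n : (/2) ^ n <= (/2) ^ m <-> (m <= n)%nat.
Proof.
  split; intro H.
  - destruct (le_lt_dec m n) as [L|L]; [exact L|].
    apply half_pow_lt_iff in L; lra.
  - destruct (Nat.eq_dec m n); [subst; lra|].
    left; apply half_pow_lt_iff; lia.
Qed.

Lemma exists_half_pow_lt e : 0 < e -> exists n, (/2) ^ n < e.
Proof.
  intro He.
  destruct (pow_lt_1_zero (/2) ltac:(rewrite Rabs_pos_eq; lra) e He) as [n Hn].
  exists n; specialize (Hn n (le_n _)).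
  rewrite Rabs_pos_eq in Hn; [exact Hn | left; apply half_pow_pos].
Qed.

Lemma iter_iter_mul {T : Type} (f : T -> T) a m x :
  Nat.iter m (Nat.iter a f) x = Nat.iter (a * m) f x.
Proof.
  induction m as [|m IH]; [rewrite Nat.mul_0_r; reflexivity|].
  rewrite Nat.mul_succ_r, Nat.add_comm, Nat.iter_add, Nat.iter_succ, IH; reflexivity.
Qed.

Section SequenceSpace.

Context {A : Type}.
Local Notation seq := (nat -> A).

Definition agree (n : nat) (x y : seq) : Prop := forall k, (k < n)%nat -> x k = y k.

Lemma agree_refl n x : agree n x x.
Proof. now intros k _. Qed.

Lemma agree_sym n x y : agree n x y -> agree n y x.
Proof. intros H k Hk; symmetry; auto. Qed.

Lemma agree_trans n x y z : agree n x y -> agree n y z -> agree n x z.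
Proof. intros H1 H2 k Hk; rewrite H1; auto. Qed.

Lemma first_diff (x y : seq) : x <> y -> exists n, x n <> y n /\ agree n x y.
Proof.
  intro Hne.
  assert (Hex : exists k, x k <> y k).
  { apply not_all_ex_not; intro H; apply Hne, functional_extensionality, H. }
  destruct (dec_inh_nat_subset_has_unique_least_element _ (fun n => classic _) Hex)
    as [n [[Hn Hmin] _]].
  exists n; split; [exact Hn|].
  intros k Hk; apply NNPP; intro E; specialize (Hmin k E); lia.
Qed.

Definition diff_index (x y : seq) (H : x <> y) : nat :=
  proj1_sig (constructive_indefinite_description _ (first_diff x y H)).

Definition seq_dist (x y : seq) : R :=
  match excluded_middle_informative (x = y) with
  | left _ => 0
  | right H => (/2) ^ diff_index x y H
  end.

Lemma agree_iff_le_diff_index x y (H : x <> y) n :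
  agree n x y <-> (n <= diff_index x y H)%nat.
Proof.
  unfold diff_index; destruct (constructive_indefinite_description _ _) as [i [Hi Hagree]]; cbn.
  split; intro Hn.
  - destruct (le_lt_dec n i) as [L|L]; [exact L|].
    exfalso; apply Hi, Hn, L.
  - intros k Hk; apply Hagree; lia.
Qed.

Lemma diff_index_neq x y (H : x <> y) : x (diff_index x y H) <> y (diff_index x y H).
Proof.
  unfold diff_index.
  exact (proj1 (proj2_sig (constructive_indefinite_description _ (first_diff x y H)))).
Qed.

Lemma seq_dist_refl x : seq_dist x x = 0.
Proof.
  unfold seq_dist; destruct (excluded_middle_informative (x = x)); [reflexivity | contradiction].
Qed.

Lemma seq_dist_le n x y : seq_dist x y <= (/2) ^ n <-> agree n x y.
Proof.
  unfold seq_dist; destruct (excluded_middle_informative (x = y)) as [E|E].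
  - subst; split; intros _; [apply agree_refl | left; apply half_pow_pos].
  - rewrite agree_iff_le_diff_index with (H := E), half_pow_le_iff; reflexivity.
Qed.

Lemma seq_dist_lt n x y : seq_dist x y < (/2) ^ n <-> agree (S n) x y.
Proof.
  unfold seq_dist; destruct (excluded_middle_informative (x = y)) as [E|E].
  - subst; split; intros _; [apply agree_refl | apply half_pow_pos].
  - rewrite agree_iff_le_diff_index with (H := E), half_pow_lt_iff; lia.
Qed.

Lemma seq_dist_nonneg x y : 0 <= seq_dist x y.
Proof.
  unfold seq_dist; destruct (excluded_middle_informative (x = y)); [lra|].
  left; apply half_pow_pos.
Qed.

Lemma seq_dist_lt_of_agree n e x y : (/2) ^ n < e -> agree n x y -> seq_dist x y < e.
Proof. intros He H; apply seq_dist_le in H; lra. Qed.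

Lemma seq_dist_metric : is_metric seq_dist.
Proof.
  split; [exact seq_dist_nonneg | split; [| split]].
  - intros x y; split; intro H.
    + apply functional_extensionality; intro k.
      apply (proj1 (seq_dist_le (S k) x y)); [| lia].
      rewrite H; left; apply half_pow_pos.
    + subst; apply seq_dist_refl.
  - intros x y; unfold seq_dist.
    destruct (excluded_middle_informative (x = y)) as [E|E],
             (excluded_middle_informative (y = x)) as [E'|E'];
      [reflexivity | congruence | congruence |].
    f_equal; apply Nat.le_antisymm.
    + apply (agree_iff_le_diff_index _ _ E'), agree_sym, (agree_iff_le_diff_index _ _ E); lia.
    + apply (agree_iff_le_diff_index _ _ E), agree_sym, (agree_iff_le_diff_index _ _ E'); lia.
  (* ultrametric: [x] and [z] differ at [i], so [y] differs from one of them there *)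
  - intros x y z; unfold seq_dist at 1.
    destruct (excluded_middle_informative (x = z)) as [E|E].
    { assert (H1 := seq_dist_nonneg x y); assert (H2 := seq_dist_nonneg y z); lra. }
    set (i := diff_index x z E).
    assert (Hi : x i <> z i) by apply diff_index_neq.
    destruct (classic (agree (S i) x y)) as [Hxy|Hxy].
    + assert (Hyz : ~ agree (S i) y z) by (intro Hyz; apply Hi, (agree_trans _ _ _ _ Hxy Hyz); lia).
      rewrite <- seq_dist_lt in Hyz; assert (H1 := seq_dist_nonneg x y); lra.
    + rewrite <- seq_dist_lt in Hxy; assert (H2 := seq_dist_nonneg y z); lra.
Qed.

Definition cylinder (z : seq) (n : nat) : seq -> Prop := fun x => agree n x z.

Definition finitely_covered {I : Type} (U : I -> seq -> Prop) (S : seq -> Prop) : Prop :=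
  exists l : list I, forall x, S x -> exists i, In i l /\ U i x.

Definition upd (z : seq) (n : nat) (a : A) : seq := fun k => if Nat.eqb k n then a else z k.

Lemma upd_same z n a : upd z n a n = a.
Proof. unfold upd; rewrite Nat.eqb_refl; reflexivity. Qed.

Lemma upd_agree z n a : agree n (upd z n a) z.
Proof. intros k Hk; unfold upd; destruct (Nat.eqb_spec k n); [lia | reflexivity]. Qed.

Lemma cylinder_upd z n x : cylinder z n x -> cylinder (upd z n (x n)) (S n) x.
Proof.
  intros Hx k Hk; unfold upd; destruct (Nat.eqb_spec k n); [now subst|].
  apply Hx; lia.
Qed.

Variable enum : list A.
Hypothesis enum_complete : forall a, In a enum.

Lemma finitely_covered_cylinder {I : Type} (U : I -> seq -> Prop) z n :
  (forall a, finitely_covered U (cylinder (upd z n a) (S n))) ->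
  finitely_covered U (cylinder z n).
Proof.
  intro Hext.
  assert (Hl : forall l, exists L : list I,
             forall x, cylinder z n x -> In (x n) l -> exists i, In i L /\ U i x).
  { induction l as [|a l [L HL]]; [exists nil; intros x _ []|].
    destruct (Hext a) as [La HLa]; exists (La ++ L).
    intros x Hx [Ha|Hin].
    - destruct (HLa x) as [i [Hi Ui]]; [subst; apply cylinder_upd, Hx|].
      exists i; split; [apply in_or_app; left|]; assumption.
    - destruct (HL x Hx Hin) as [i [Hi Ui]].
      exists i; split; [apply in_or_app; right|]; assumption. }
  destruct (Hl enum) as [L HL]; exists L; intros x Hx; apply HL, enum_complete; exact Hx.
Qed.

Variables a1 a2 : A.
Hypothesis a1_neq_a2 : a1 <> a2.

(* Koenig's lemma: if no finite subcover exists, descend through cylinders that are not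
   finitely covered; their limit point lies in some [U i], which then covers a whole cylinder. *)
Lemma seq_compact : compact_space seq_dist.
Proof.
  intros I U Hopen Hcover; apply NNPP; intro Hnone.
  set (uncovered z n := ~ finitely_covered U (cylinder z n)).
  set (next z n := epsilon (inhabits a1) (fun a => uncovered (upd z n a) (S n))).
  set (zs := fix zs n := match n with O => fun _ => a1 | S n => upd (zs n) n (next (zs n) n) end).
  assert (Hzs : forall n, uncovered (zs n) n).
  { induction n as [|n IH].
    - intros [l Hl]; apply Hnone; exists l; intro x; apply Hl; intros k Hk; lia.
    - cbn; apply (epsilon_spec (inhabits a1) (fun a => uncovered (upd (zs n) n a) (S n))).
      apply NNPP; intro Hall; apply IH, finitely_covered_cylinder.
      intro a; apply NNPP; intro Ha; apply Hall; exists a; exact Ha. }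
  assert (Hstable : forall m n, (n <= m)%nat -> agree n (zs m) (zs n)).
  { induction m as [|m IH]; intros n Hn k Hk; [lia|].
    destruct (Nat.eq_dec n (S m)); [now subst|].
    transitivity (zs m k); [apply upd_agree | apply IH]; lia. }
  set (w k := zs (S k) k).
  destruct (Hcover w) as [i Hi]; destruct (Hopen i w Hi) as [e [He Hball]].
  destruct (exists_half_pow_lt e He) as [n Hn].
  apply (Hzs (S n)); exists (i :: nil); intros x Hx; exists i; split; [left; reflexivity|].
  apply Hball; apply Rlt_trans with ((/2) ^ n); [|exact Hn].
  apply seq_dist_lt, agree_trans with (zs (S n)); [|apply agree_sym, Hx].
  intros k Hk; symmetry; apply (Hstable (S n) (S k)); lia.
Qed.

Lemma seq_no_isolated_points : no_isolated_points seq_dist.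
Proof.
  intros x e He; destruct (exists_half_pow_lt e He) as [n Hn].
  set (a := if excluded_middle_informative (x n = a1) then a2 else a1).
  assert (Ha : a <> x n).
  { unfold a; destruct (excluded_middle_informative (x n = a1)); congruence. }
  exists (upd x n a); split.
  - intro E; apply Ha; rewrite <- (upd_same x n a), E; reflexivity.
  - apply (seq_dist_lt_of_agree n); [exact Hn|].
    apply agree_sym, upd_agree.
Qed.

(* Two distinct points are separated by the clopen cylinder of one of them. *)
Lemma seq_totally_disconnected : totally_disconnected seq_dist.
Proof.
  intros B HB x y Bx By; apply NNPP; intro Hne.
  destruct (first_diff x y Hne) as [n [Hn _]].
  apply HB; exists (cylinder x (S n)), (fun z => ~ cylinder x (S n) z).
  split; [|split; [|split; [|split; [|split]]]].
  - intros z Hz; exists ((/2) ^ n); split; [apply half_pow_pos|].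
    intros w Hw; apply seq_dist_lt in Hw; apply agree_trans with z; [apply agree_sym|]; assumption.
  - intros z Hz; exists ((/2) ^ n); split; [apply half_pow_pos|].
    intros w Hw Hxw; apply seq_dist_lt in Hw; apply Hz, agree_trans with w; assumption.
  - intros z _; apply classic.
  - exists x; split; [exact Bx | apply agree_refl].
  - exists y; split; [exact By|]; intro H; apply Hn; symmetry; apply H; lia.
  - intros z _ H1 H2; exact (H2 H1).
Qed.

Lemma seq_cantor_space : cantor_space seq_dist.
Proof.
  split; [exact (inhabits (fun _ => a1)) | split; [exact seq_dist_metric | split]].
  - exact seq_compact.
  - split; [exact seq_no_isolated_points | exact seq_totally_disconnected].
Qed.

End SequenceSpace.

Section NonexpandingMaps.

Context {A : Type}.
Local Notation seq := (nat -> A).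

Definition nonexpanding (f : seq -> seq) : Prop :=
  forall n x y, agree n x y -> agree n (f x) (f y).

Lemma nonexpanding_iter f m : nonexpanding f -> nonexpanding (Nat.iter m f).
Proof. intro Hf; induction m as [|m IH]; intros n x y H; [exact H | apply Hf, IH, H]. Qed.

Lemma nonexpanding_continuous f : nonexpanding f -> continuous seq_dist f.
Proof.
  intros Hf x e He; destruct (exists_half_pow_lt e He) as [n Hn].
  exists ((/2) ^ n); split; [apply half_pow_pos|].
  intros y Hy; apply (seq_dist_lt_of_agree n); [exact Hn|].
  apply seq_dist_lt in Hy; apply Hf; intros k Hk; apply Hy; lia.
Qed.

Lemma nonexpanding_equicontinuous f g :
  nonexpanding f -> nonexpanding g -> equicontinuous seq_dist f g.
Proof.
  intros Hf Hg e He; destruct (exists_half_pow_lt e He) as [n Hn].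
  exists ((/2) ^ n); split; [apply half_pow_pos|].
  intros x y Hxy i; apply seq_dist_le in Hxy; left.
  apply (seq_dist_lt_of_agree n); [exact Hn|].
  destruct i; cbn; [exact Hxy | apply nonexpanding_iter; auto ..].
Qed.

Lemma agree_pseudo_orbit f n (xs : nat -> seq) m p :
  nonexpanding f -> (forall i, (i < m)%nat -> agree n (f (xs i)) (xs (S i))) ->
  agree n p (xs O) -> forall i, (i <= m)%nat -> agree n (Nat.iter i f p) (xs i).
Proof.
  intros Hf Hxs Hp i; induction i as [|i IH]; intro Hi; [exact Hp|].
  apply agree_trans with (f (xs i)); [apply Hf, IH | apply Hxs]; lia.
Qed.

Lemma delta_cycle_agree (f : seq -> seq) n xs m :
  delta_cycle seq_dist f ((/2) ^ n) xs m ->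
  forall i, (i < m)%nat -> agree n (f (xs i)) (xs (S i)).
Proof. intros [_ [Hxs _]] i Hi; apply seq_dist_le, Hxs, Hi. Qed.

Lemma dense_periodic_of_approx (f : seq -> seq) :
  (forall x n, exists p, periodic_point f p /\ agree n p x) -> dense_periodic seq_dist f.
Proof.
  intros Happrox x e He; destruct (exists_half_pow_lt e He) as [n Hn].
  destruct (Happrox x n) as [p [Hp Hpx]]; exists p; split; [exact Hp|].
  apply (seq_dist_lt_of_agree n); [exact Hn | apply agree_sym, Hpx].
Qed.

Lemma periodic_shadowing_of_approx f :
  nonexpanding f -> (forall x n, exists p, periodic_point f p /\ agree n p x) ->
  periodic_shadowing seq_dist f.
Proof.
  intros Hf Happrox e He; destruct (exists_half_pow_lt e He) as [n Hn].
  exists ((/2) ^ n); split; [apply half_pow_pos|].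
  intros xs m Hcycle; destruct (Happrox (xs O) n) as [p [Hp Hpx]].
  exists p; split; [exact Hp|]; intros i Hi; left.
  apply (seq_dist_lt_of_agree n); [exact Hn|]; apply agree_sym.
  exact (agree_pseudo_orbit f n xs m p Hf (delta_cycle_agree f n xs m Hcycle) Hpx i Hi).
Qed.

(* After [m] steps the shadowing point follows the cycle back to [xs 0] on its first [n]
   digits, and its other digits never move. *)
Lemma strict_periodic_shadowing_of_fixed_tails f :
  nonexpanding f ->
  (forall x n, exists p, agree n p x /\ forall m k, (n <= k)%nat -> Nat.iter m f p k = p k) ->
  strict_periodic_shadowing seq_dist f.
Proof.
  intros Hf Happrox e He; destruct (exists_half_pow_lt e He) as [n Hn].
  exists ((/2) ^ n); split; [apply half_pow_pos|].
  intros xs m Hcycle; destruct (Happrox (xs O) n) as [p [Hpx Htail]].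
  assert (Horbit := agree_pseudo_orbit f n xs m p Hf (delta_cycle_agree f n xs m Hcycle) Hpx).
  exists p; split.
  - apply functional_extensionality; intro k; destruct (le_lt_dec n k) as [L|L]; [apply Htail, L|].
    destruct Hcycle as [_ [_ Hclosed]].
    rewrite (Horbit m (le_n m) k L), <- Hclosed; symmetry; exact (Hpx k L).
  - intros i Hi; left; apply (seq_dist_lt_of_agree n); [exact Hn|].
    apply agree_sym, Horbit, Hi.
Qed.

End NonexpandingMaps.

Inductive sym := b0 | b1 | q0 | q1 | q2.

Definition is_stop (a : sym) : Prop := match a with q0 | q1 | q2 => True | _ => False end.

Definition rot (a : sym) : sym := match a with q0 => q1 | q1 => q2 | q2 => q0 | a => a end.

Definition rotn (c : nat) : sym -> sym := Nat.iter c rot.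
Arguments rotn : simpl never.

Definition flip_rot (c : nat) (a : sym) : sym :=
  match a with b0 => b1 | b1 => b0 | a => rotn c a end.

Lemma rotn_bit c a : ~ is_stop a -> rotn c a = a.
Proof.
  intro Ha; induction c as [|c IH]; [reflexivity|].
  change (rot (rotn c a) = a); rewrite IH; destruct a; cbn in *; tauto.
Qed.

Lemma rotn_add a b s : rotn a (rotn b s) = rotn (a + b) s.
Proof. unfold rotn; rewrite Nat.iter_add; reflexivity. Qed.

Lemma rotn_mul3 q s : rotn (3 * q) s = s.
Proof.
  induction q as [|q IH]; [reflexivity|].
  replace (3 * S q)%nat with (3 + 3 * q)%nat by lia.
  rewrite <- rotn_add, IH; destruct s; reflexivity.
Qed.

Lemma is_stop_rotn c s : is_stop (rotn c s) <-> is_stop s.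
Proof.
  induction c as [|c IH]; [reflexivity|].
  change (is_stop (rot (rotn c s)) <-> is_stop s); rewrite <- IH.
  destruct (rotn c s); cbn; tauto.
Qed.

Lemma rotn_pow2 K : (forall s, rotn (2 ^ K) s = rot s) \/ (forall s, rotn (2 ^ K) s = rot (rot s)).
Proof.
  induction K as [|K [IH|IH]]; [left; reflexivity| right | left]; intro s;
    replace (2 ^ S K)%nat with (2 ^ K + 2 ^ K)%nat by (cbn; lia); rewrite <- rotn_add, !IH;
    [reflexivity | destruct s; reflexivity].
Qed.

Lemma rotn_pow2_neq K s : is_stop s -> rotn (2 ^ K) s <> s.
Proof. intro Hs; destruct (rotn_pow2 K) as [H|H]; rewrite H; destruct s; cbn in *; easy. Qed.

Definition stl (x : nat -> sym) : nat -> sym := fun k => x (S k).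

Definition scons (a : sym) (t : nat -> sym) : nat -> sym :=
  fun k => match k with O => a | S k => t k end.

Lemma stl_scons a t : stl (scons a t) = t.
Proof. reflexivity. Qed.

Lemma scons_eta x : scons (x O) (stl x) = x.
Proof. apply functional_extensionality; intros [|k]; reflexivity. Qed.

(* Words are functions, so the maps are defined digit by digit: [rot_first c] turns the first
   marker by [c]; [odo c] adds one to the bits before the first marker, carrying to the right,
   and turns that marker by [c].  The parameter [c] is what makes two steps of [odo c] on a
   word starting with a bit equal one step of [odo (c + c)] on its tail. *)
Fixpoint rot_first_at (c k : nat) (x : nat -> sym) : sym :=
  match k with
  | O => rotn c (x O)
  | S k => match x O with b0 | b1 => rot_first_at c k (stl x) | _ => x (S k) end
  end.

Definition rot_first (c : nat) (x : nat -> sym) : nat -> sym := fun k => rot_first_at c k x.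

Fixpoint odo_at (c k : nat) (x : nat -> sym) : sym :=
  match k with
  | O => flip_rot c (x O)
  | S k => match x O with
           | b0 => rot_first c (stl x) k
           | b1 => odo_at c k (stl x)
           | _ => x (S k)
           end
  end.

Definition odo (c : nat) (x : nat -> sym) : nat -> sym := fun k => odo_at c k x.

Fixpoint odo_inv_at (k : nat) (x : nat -> sym) : sym :=
  match k with
  | O => flip_rot 2 (x O)
  | S k => match x O with
           | b0 => odo_inv_at k (stl x)
           | b1 => rot_first 2 (stl x) k
           | _ => x (S k)
           end
  end.

Definition odo_inv (x : nat -> sym) : nat -> sym := fun k => odo_inv_at k x.

Lemma rot_first_stop c x : is_stop (x O) -> rot_first c x = scons (rotn c (x O)) (stl x).
Proof.
  intro Hs; apply functional_extensionality; intros [|k]; [reflexivity|].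
  unfold rot_first; cbn; destruct (x O); cbn in Hs; easy.
Qed.

Lemma rot_first_bit c x : ~ is_stop (x O) -> rot_first c x = scons (x O) (rot_first c (stl x)).
Proof.
  intro Hb; apply functional_extensionality; intros [|k]; [exact (rotn_bit c _ Hb)|].
  unfold rot_first; cbn; destruct (x O); cbn in Hb; tauto.
Qed.

Lemma odo_stop c x : is_stop (x O) -> odo c x = scons (rotn c (x O)) (stl x).
Proof.
  intro Hs; apply functional_extensionality; intros [|k];
    unfold odo; cbn; destruct (x O); cbn in Hs; easy.
Qed.

Lemma odo_b0 c x : x O = b0 -> odo c x = scons b1 (rot_first c (stl x)).
Proof.
  intro H; apply functional_extensionality; intros [|k]; unfold odo; cbn; rewrite H; reflexivity.
Qed.

Lemma odo_b1 c x : x O = b1 -> odo c x = scons b0 (odo c (stl x)).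
Proof.
  intro H; apply functional_extensionality; intros [|k]; unfold odo; cbn; rewrite H; reflexivity.
Qed.

Lemma rot_first_head c x : rot_first c x O = rotn c (x O).
Proof. reflexivity. Qed.

Lemma odo_head c x : odo c x O = flip_rot c (x O).
Proof. reflexivity. Qed.

Lemma odo_inv_stop x : is_stop (x O) -> odo_inv x = scons (rotn 2 (x O)) (stl x).
Proof.
  intro Hs; apply functional_extensionality; intros [|k];
    unfold odo_inv; cbn; destruct (x O); cbn in Hs; easy.
Qed.

Lemma odo_inv_b0 x : x O = b0 -> odo_inv x = scons b1 (odo_inv (stl x)).
Proof.
  intro H; apply functional_extensionality; intros [|k];
    unfold odo_inv; cbn; rewrite H; reflexivity.
Qed.

Lemma odo_inv_b1 x : x O = b1 -> odo_inv x = scons b0 (rot_first 2 (stl x)).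
Proof.
  intro H; apply functional_extensionality; intros [|k];
    unfold odo_inv; cbn; rewrite H; reflexivity.
Qed.

Opaque rot_first odo odo_inv.

Lemma head_cases (x : nat -> sym) : x O = b0 \/ x O = b1 \/ is_stop (x O).
Proof. destruct (x O); cbn; tauto. Qed.

Ltac head_tac := cbn [scons]; first [assumption | apply is_stop_rotn; assumption].

Lemma rot_first_add a b x : rot_first a (rot_first b x) = rot_first (a + b) x.
Proof.
  apply functional_extensionality; intro k; revert x; induction k as [|k IH]; intro x;
    destruct (classic (is_stop (x O))) as [Hs|Hb].
  - rewrite (rot_first_stop b), (rot_first_stop (a + b)), rot_first_stop by head_tac.
    apply rotn_add.
  - rewrite (rot_first_bit b), (rot_first_bit (a + b)), rot_first_bit by head_tac.
    reflexivity.
  - rewrite (rot_first_stop b), (rot_first_stop (a + b)), rot_first_stop by head_tac.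
    reflexivity.
  - rewrite (rot_first_bit b), (rot_first_bit (a + b)), rot_first_bit by head_tac.
    apply IH.
Qed.

Lemma rot_first_3 x : rot_first 3 x = x.
Proof.
  apply functional_extensionality; intro k; revert x; induction k as [|k IH]; intro x;
    destruct (classic (is_stop (x O))) as [Hs|Hb].
  - rewrite rot_first_stop by head_tac; apply (rotn_mul3 1).
  - rewrite rot_first_bit by head_tac; reflexivity.
  - rewrite rot_first_stop by head_tac; reflexivity.
  - rewrite rot_first_bit by head_tac; apply IH.
Qed.

Lemma odo_rot_first a b x : odo a (rot_first b x) = odo (a + b) x.
Proof.
  apply functional_extensionality; intro k; revert x; induction k as [|k IH]; intro x;
    destruct (head_cases x) as [H|[H|Hs]].
  - rewrite (odo_b0 _ x H), rot_first_bit, odo_b0 by (cbn; rewrite ?H; easy); reflexivity.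
  - rewrite (odo_b1 _ x H), rot_first_bit, odo_b1 by (cbn; rewrite ?H; easy); reflexivity.
  - rewrite rot_first_stop, !odo_stop by head_tac; apply rotn_add.
  - rewrite (odo_b0 _ x H), rot_first_bit, odo_b0 by (cbn; rewrite ?H; easy); cbn.
    rewrite stl_scons, rot_first_add; reflexivity.
  - rewrite (odo_b1 _ x H), rot_first_bit, odo_b1 by (cbn; rewrite ?H; easy); cbn.
    rewrite stl_scons; apply IH.
  - rewrite rot_first_stop, !odo_stop by head_tac; reflexivity.
Qed.

Lemma rot_first_odo a b x : rot_first b (odo a x) = odo (a + b) x.
Proof.
  apply functional_extensionality; intro k; revert x; induction k as [|k IH]; intro x;
    destruct (head_cases x) as [H|[H|Hs]].
  - rewrite (odo_b0 _ x H), (odo_b0 _ x H), rot_first_bit by easy; reflexivity.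
  - rewrite (odo_b1 _ x H), (odo_b1 _ x H), rot_first_bit by easy; reflexivity.
  - rewrite (odo_stop _ x Hs), (odo_stop _ x Hs), rot_first_stop by head_tac; cbn.
    rewrite rotn_add, Nat.add_comm; reflexivity.
  - rewrite (odo_b0 _ x H), (odo_b0 _ x H), rot_first_bit by easy; cbn.
    rewrite stl_scons, rot_first_add, Nat.add_comm; reflexivity.
  - rewrite (odo_b1 _ x H), (odo_b1 _ x H), rot_first_bit by easy; cbn.
    rewrite stl_scons; apply IH.
  - rewrite (odo_stop _ x Hs), (odo_stop _ x Hs), rot_first_stop by head_tac; reflexivity.
Qed.

Lemma odo_inv_odo x : odo_inv (odo 1 x) = x.
Proof.
  apply functional_extensionality; intro k; revert x; induction k as [|k IH]; intro x;
    destruct (head_cases x) as [H|[H|Hs]].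
  - rewrite (odo_b0 _ x H), odo_inv_b1 by easy; cbn; rewrite H; reflexivity.
  - rewrite (odo_b1 _ x H), odo_inv_b0 by easy; cbn; rewrite H; reflexivity.
  - rewrite (odo_stop _ x Hs), odo_inv_stop by head_tac; cbn.
    rewrite rotn_add; apply (rotn_mul3 1).
  - rewrite (odo_b0 _ x H), odo_inv_b1 by easy; cbn.
    rewrite stl_scons, rot_first_add, rot_first_3; reflexivity.
  - rewrite (odo_b1 _ x H), odo_inv_b0 by easy; cbn.
    rewrite stl_scons; apply IH.
  - rewrite (odo_stop _ x Hs), odo_inv_stop by head_tac; reflexivity.
Qed.

Lemma odo_odo_inv x : odo 1 (odo_inv x) = x.
Proof.
  apply functional_extensionality; intro k; revert x; induction k as [|k IH]; intro x;
    destruct (head_cases x) as [H|[H|Hs]].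
  - rewrite (odo_inv_b0 x H), odo_b1 by easy; cbn; rewrite H; reflexivity.
  - rewrite (odo_inv_b1 x H), odo_b0 by easy; cbn; rewrite H; reflexivity.
  - rewrite (odo_inv_stop x Hs), odo_stop by head_tac; cbn.
    rewrite rotn_add; apply (rotn_mul3 1).
  - rewrite (odo_inv_b0 x H), odo_b1 by easy; cbn.
    rewrite stl_scons; apply IH.
  - rewrite (odo_inv_b1 x H), odo_b0 by easy; cbn.
    rewrite stl_scons, rot_first_add, rot_first_3; reflexivity.
  - rewrite (odo_inv_stop x Hs), odo_stop by head_tac; reflexivity.
Qed.

Lemma odo_odo_scons c a t : ~ is_stop a -> odo c (odo c (scons a t)) = scons a (odo (c + c) t).
Proof.
  intro Ha; destruct a; cbn in Ha; try tauto.
  - rewrite (odo_b0 c (scons b0 t)), odo_b1, stl_scons, odo_rot_first by reflexivity; reflexivity.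
  - rewrite (odo_b1 c (scons b1 t)), odo_b0, stl_scons, rot_first_odo by reflexivity; reflexivity.
Qed.

Lemma iter_odo_scons c a t n :
  ~ is_stop a -> Nat.iter (2 * n) (odo c) (scons a t) = scons a (Nat.iter n (odo (c + c)) t).
Proof.
  intro Ha; induction n as [|n IH]; [reflexivity|].
  replace (2 * S n)%nat with (S (S (2 * n))) by lia; rewrite !Nat.iter_succ.
  rewrite IH; apply odo_odo_scons, Ha.
Qed.

(* [2 ^ K] steps add [2 ^ K] to the binary prefix of length [K]: the prefix comes back and
   digit [K] receives one step of the odometer. *)
Lemma iter_odo_pow2 K c x : (forall k, (k < K)%nat -> ~ is_stop (x k)) ->
  agree K (Nat.iter (2 ^ K) (odo c) x) x /\
  Nat.iter (2 ^ K) (odo c) x K = flip_rot (2 ^ K * c) (x K).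
Proof.
  revert c x; induction K as [|K IH]; intros c x Hbits.
  - split; [intros k Hk; lia|]; cbn [Nat.pow Nat.iter]; rewrite Nat.mul_1_l; apply odo_head.
  - rewrite <- (scons_eta x), Nat.pow_succ_r', iter_odo_scons by (apply Hbits; lia).
    destruct (IH (c + c)%nat (stl x)) as [Hprefix Hdigit].
    { intros k Hk; apply (Hbits (S k)); lia. }
    split.
    + intros [|k] Hk; [reflexivity | apply Hprefix; lia].
    + cbn [scons]; rewrite Hdigit; f_equal; lia.
Qed.

Lemma is_stop_rot_first c k x : is_stop (rot_first c x k) <-> is_stop (x k).
Proof.
  revert x; induction k as [|k IH]; intro x; destruct (classic (is_stop (x O))) as [Hs|Hb].
  - rewrite rot_first_stop by exact Hs; apply is_stop_rotn.
  - rewrite rot_first_bit by exact Hb; reflexivity.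
  - rewrite rot_first_stop by exact Hs; reflexivity.
  - rewrite rot_first_bit by exact Hb; exact (IH (stl x)).
Qed.

Lemma is_stop_odo c k x : is_stop (odo c x k) <-> is_stop (x k).
Proof.
  revert x; induction k as [|k IH]; intro x; destruct (head_cases x) as [H|[H|Hs]].
  - rewrite odo_head, H; cbn; tauto.
  - rewrite odo_head, H; cbn; tauto.
  - rewrite odo_stop by exact Hs; apply is_stop_rotn.
  - rewrite odo_b0 by exact H; exact (is_stop_rot_first c k (stl x)).
  - rewrite odo_b1 by exact H; exact (IH (stl x)).
  - rewrite odo_stop by exact Hs; reflexivity.
Qed.

Lemma is_stop_iter_odo c n k x : is_stop (Nat.iter n (odo c) x k) <-> is_stop (x k).
Proof. induction n as [|n IH]; [reflexivity|]; rewrite Nat.iter_succ, is_stop_odo; exact IH. Qed.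

Definition first_stop (x : nat -> sym) (j : nat) : Prop :=
  is_stop (x j) /\ forall k, (k < j)%nat -> ~ is_stop (x k).

Lemma exists_first_stop x j : is_stop (x j) -> exists i, (i <= j)%nat /\ first_stop x i.
Proof.
  intro Hj.
  destruct (dec_inh_nat_subset_has_unique_least_element (fun i => is_stop (x i))
              (fun i => classic _) (ex_intro _ j Hj)) as [i [[Hi Hmin] _]].
  exists i; split; [apply Hmin, Hj|]; split; [exact Hi|].
  intros k Hk Hs; specialize (Hmin k Hs); lia.
Qed.

Lemma first_stop_odo c x j : first_stop x j -> first_stop (odo c x) j.
Proof.
  intros [Hj Hbits]; split; [apply is_stop_odo, Hj|].
  intros k Hk; rewrite is_stop_odo; apply Hbits, Hk.
Qed.

Lemma rot_first_bits c x j :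
  (forall k, (k < j)%nat -> ~ is_stop (x k)) -> rot_first c x j = rotn c (x j).
Proof.
  revert x; induction j as [|j IH]; intros x Hbits.
  - apply rot_first_head.
  - rewrite rot_first_bit by (apply Hbits; lia); apply (IH (stl x)).
    intros k Hk; apply (Hbits (S k)); lia.
Qed.

Lemma odo_first_stop c x j : first_stop x j -> odo c x j = rotn c (x j).
Proof.
  revert x; induction j as [|j IH]; intros x [Hj Hbits].
  - rewrite odo_stop by exact Hj; reflexivity.
  - destruct (head_cases x) as [H|[H|Hs]].
    + rewrite odo_b0 by exact H; apply (rot_first_bits c (stl x)).
      intros k Hk; apply (Hbits (S k)); lia.
    + rewrite odo_b1 by exact H; apply (IH (stl x)); split; [exact Hj|].
      intros k Hk; apply (Hbits (S k)); lia.
    + exfalso; apply (Hbits O); [lia | exact Hs].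
Qed.

Lemma iter_odo_first_stop c n x j : first_stop x j -> Nat.iter n (odo c) x j = rotn (n * c) (x j).
Proof.
  intro Hj; induction n as [|n IH]; [reflexivity|].
  assert (Hn : first_stop (Nat.iter n (odo c) x) j).
  { apply (Nat.iter_invariant n _ _ (fun y => first_stop y j)); [|exact Hj].
    intro y; apply first_stop_odo. }
  rewrite Nat.iter_succ, odo_first_stop, IH, rotn_add by exact Hn; reflexivity.
Qed.

Lemma rot_first_after_stop c x j k : is_stop (x j) -> (j < k)%nat -> rot_first c x k = x k.
Proof.
  revert x k; induction j as [|j IH]; intros x [|k] Hj Hk; try lia;
    destruct (classic (is_stop (x O))) as [Hs|Hb].
  - rewrite rot_first_stop by exact Hs; reflexivity.
  - contradiction.
  - rewrite rot_first_stop by exact Hs; reflexivity.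
  - rewrite rot_first_bit by exact Hb; apply (IH (stl x)); [exact Hj | lia].
Qed.

Lemma odo_after_stop c x j k : is_stop (x j) -> (j < k)%nat -> odo c x k = x k.
Proof.
  revert x k; induction j as [|j IH]; intros x [|k] Hj Hk; try lia;
    destruct (head_cases x) as [H|[H|Hs]];
    try (rewrite odo_stop by exact Hs; reflexivity); try (rewrite H in Hj; contradiction).
  - rewrite odo_b0 by exact H; apply (rot_first_after_stop c (stl x) j); [exact Hj | lia].
  - rewrite odo_b1 by exact H; apply (IH (stl x)); [exact Hj | lia].
Qed.

Lemma iter_odo_after_stop c n x j k : is_stop (x j) -> (j < k)%nat -> Nat.iter n (odo c) x k = x k.
Proof.
  intros Hj Hk; induction n as [|n IH]; [reflexivity|].
  rewrite Nat.iter_succ, (odo_after_stop c _ j); [exact IH | apply is_stop_iter_odo, Hj | exact Hk].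
Qed.

Lemma iter_odo_mul3_tail c m x j k :
  is_stop (x j) -> (j <= k)%nat -> Nat.iter (3 * m) (odo c) x k = x k.
Proof.
  intros Hj Hk; destruct (exists_first_stop x j Hj) as [i [Hij Hi]].
  destruct (Nat.eq_dec k i) as [->|Hne].
  - rewrite iter_odo_first_stop by exact Hi; rewrite <- Nat.mul_assoc; apply rotn_mul3.
  - apply (iter_odo_after_stop c _ x i); [apply Hi | lia].
Qed.

Lemma iter_odo_pow2_mul_prefix K c m x : (forall k, (k < K)%nat -> ~ is_stop (x k)) ->
  agree K (Nat.iter (2 ^ K * m) (odo c) x) x.
Proof.
  revert x; induction m as [|m IH]; intros x Hbits; [rewrite Nat.mul_0_r; apply agree_refl|].
  rewrite Nat.mul_succ_r, Nat.iter_add.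
  destruct (iter_odo_pow2 K c x Hbits) as [Hprefix _].
  apply agree_trans with (Nat.iter (2 ^ K) (odo c) x); [apply IH | exact Hprefix].
  intros k Hk; rewrite (Hprefix k Hk); apply Hbits, Hk.
Qed.

Lemma odo_periodic c x j : is_stop (x j) -> periodic_point (odo c) x.
Proof.
  intro Hj; destruct (exists_first_stop x j Hj) as [i [_ [Hi Hbits]]].
  exists (2 ^ i * 3)%nat; split; [pose proof (Nat.pow_nonzero 2 i); lia|].
  apply functional_extensionality; intro k; destruct (le_lt_dec i k) as [L|L].
  - rewrite Nat.mul_comm; apply (iter_odo_mul3_tail c _ x i); assumption.
  - apply (iter_odo_pow2_mul_prefix i c 3 x Hbits k L).
Qed.

(* A marker among the first [K + 1] digits is rotated by [2 ^ K], which is not a multiple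
   of 3; otherwise digit [K] is flipped. *)
Lemma iter_odo_pow2_neq K x : Nat.iter (2 ^ K) (odo 1) x <> x.
Proof.
  intro E; destruct (classic (exists j, (j <= K)%nat /\ is_stop (x j))) as [[j [_ Hj]]|Hnone].
  - destruct (exists_first_stop x j Hj) as [i [_ Hi]].
    apply (rotn_pow2_neq K (x i)); [apply Hi|].
    rewrite <- (Nat.mul_1_r (2 ^ K)), <- iter_odo_first_stop, E by exact Hi; reflexivity.
  - assert (Hbits : forall k, (k <= K)%nat -> ~ is_stop (x k)) by (intros k Hk Hs; eauto).
    destruct (iter_odo_pow2 K 1 x (fun k Hk => Hbits k (Nat.lt_le_incl _ _ Hk))) as [_ Hdigit].
    rewrite E in Hdigit; specialize (Hbits K (le_n K)).
    destruct (x K); cbn in *; easy.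
Qed.

Lemma agree_scons n a t t' : agree n t t' -> agree (S n) (scons a t) (scons a t').
Proof. intros H [|k] Hk; [reflexivity | apply H; lia]. Qed.

Lemma agree_stl n x y : agree (S n) x y -> agree n (stl x) (stl y).
Proof. intros H k Hk; apply H; lia. Qed.

Lemma nonexpanding_rot_first c : nonexpanding (rot_first c).
Proof.
  intro n; induction n as [|n IH]; intros x y Hxy; [intros k Hk; lia|].
  assert (H0 : x O = y O) by (apply Hxy; lia).
  destruct (classic (is_stop (x O))) as [Hs|Hb].
  - rewrite (rot_first_stop c x), (rot_first_stop c y), H0 by (rewrite <- ?H0; exact Hs).
    apply agree_scons, agree_stl, Hxy.
  - rewrite (rot_first_bit c x), (rot_first_bit c y), H0 by (rewrite <- ?H0; exact Hb).
    apply agree_scons, IH, agree_stl, Hxy.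
Qed.

Lemma nonexpanding_odo c : nonexpanding (odo c).
Proof.
  intro n; induction n as [|n IH]; intros x y Hxy; [intros k Hk; lia|].
  assert (H0 : x O = y O) by (apply Hxy; lia).
  destruct (head_cases x) as [H|[H|Hs]].
  - rewrite (odo_b0 c x), (odo_b0 c y) by congruence.
    apply agree_scons, nonexpanding_rot_first, agree_stl, Hxy.
  - rewrite (odo_b1 c x), (odo_b1 c y) by congruence.
    apply agree_scons, IH, agree_stl, Hxy.
  - rewrite (odo_stop c x), (odo_stop c y), H0 by (rewrite <- ?H0; exact Hs).
    apply agree_scons, agree_stl, Hxy.
Qed.

Lemma nonexpanding_odo_inv : nonexpanding odo_inv.
Proof.
  intro n; induction n as [|n IH]; intros x y Hxy; [intros k Hk; lia|].
  assert (H0 : x O = y O) by (apply Hxy; lia).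
  destruct (head_cases x) as [H|[H|Hs]].
  - rewrite (odo_inv_b0 x), (odo_inv_b0 y) by congruence.
    apply agree_scons, IH, agree_stl, Hxy.
  - rewrite (odo_inv_b1 x), (odo_inv_b1 y) by congruence.
    apply agree_scons, nonexpanding_rot_first, agree_stl, Hxy.
  - rewrite (odo_inv_stop x), (odo_inv_stop y), H0 by (rewrite <- ?H0; exact Hs).
    apply agree_scons, agree_stl, Hxy.
Qed.

Lemma odo_homeomorphism : homeomorphism seq_dist (odo 1) odo_inv.
Proof.
  split; [exact odo_inv_odo | split; [exact odo_odo_inv | split]];
    apply nonexpanding_continuous; [apply nonexpanding_odo | apply nonexpanding_odo_inv].
Qed.

Lemma odo_periodic_approx c x n : exists p, periodic_point (odo c) p /\ agree n p x.
Proof.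
  exists (upd x n q0); split; [apply (odo_periodic c _ n) | apply upd_agree].
  rewrite upd_same; exact I.
Qed.

Lemma odo3_fixed_tails x n :
  exists p, agree n p x /\ forall m k, (n <= k)%nat -> Nat.iter m (Nat.iter 3 (odo 1)) p k = p k.
Proof.
  exists (upd x n q0); split; [apply upd_agree|]; intros m k Hk.
  rewrite iter_iter_mul.
  apply (iter_odo_mul3_tail 1 m _ n); [rewrite upd_same; exact I | exact Hk].
Qed.

(* The cycle runs [2 ^ K] steps along the orbit of the all-[b0] word and jumps back, which is
   a [(/2) ^ K]-jump; a shadowing point would be fixed by [2 ^ K] steps. *)
Lemma odo_not_strict_periodic_shadowing : ~ strict_periodic_shadowing seq_dist (odo 1).
Proof.
  intro Hstrict; destruct (Hstrict 1 ltac:(lra)) as [dl [Hdl Hshadow]].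
  destruct (exists_half_pow_lt dl Hdl) as [K HK].
  set (m := (2 ^ K)%nat); set (w := fun _ : nat => b0).
  set (xs i := if Nat.eqb i m then w else Nat.iter i (odo 1) w).
  assert (Hm : (1 <= m)%nat) by (pose proof (Nat.pow_nonzero 2 K); unfold m; lia).
  destruct (Hshadow xs m) as [p [Hp _]]; [|exact (iter_odo_pow2_neq K p Hp)].
  split; [exact Hm | split].
  - intros i Hi; unfold xs; destruct (Nat.eqb_spec i m) as [|_]; [lia|].
    rewrite <- Nat.iter_succ; destruct (Nat.eqb_spec (S i) m) as [->|_].
    + left; apply (seq_dist_lt_of_agree K); [exact HK|].
      apply (iter_odo_pow2 K 1 w); intros k _; unfold w; easy.
    + rewrite seq_dist_refl; lra.
  - unfold xs; rewrite Nat.eqb_refl; destruct (Nat.eqb_spec 0 m); [lia | reflexivity].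
Qed.

Theorem mainTheorem13 :
  exists (X : Type) (d : X -> X -> R) (f g : X -> X),
    cantor_space d /\ homeomorphism d f g /\
    dense_periodic d f /\
    equicontinuous d f g /\
    periodic_shadowing d f /\
    ~ strict_periodic_shadowing d f /\
    strict_periodic_shadowing d (Nat.iter 3 f).
Proof.
  exists (nat -> sym), seq_dist, (odo 1), odo_inv.
  assert (Hodo := nonexpanding_odo 1).
  split; [|split; [|split; [|split; [|split; [|split]]]]].
  - refine (seq_cantor_space (b0 :: b1 :: q0 :: q1 :: q2 :: nil) _ b0 b1 _);
      [intros []; cbn; tauto | discriminate].
  - exact odo_homeomorphism.
  - apply dense_periodic_of_approx; intros x n; apply odo_periodic_approx.
  - exact (nonexpanding_equicontinuous _ _ Hodo nonexpanding_odo_inv).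
  - apply periodic_shadowing_of_approx; [exact Hodo | intros x n; apply odo_periodic_approx].
  - exact odo_not_strict_periodic_shadowing.
  - apply strict_periodic_shadowing_of_fixed_tails;
      [apply nonexpanding_iter, Hodo | exact odo3_fixed_tails].
Qed.
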